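(* For every session type $T$ (in the syntax described in the context), the set of bottom-up subterms of $T$ satisfies $|\mathrm{Sub}_{BU}(T)| \leq |T|$, where $|\mathrm{Sub}_{BU}(T)|$ is the cardinality of this set and $|T|$ is the size of $T$.
   Context: Session types (possibly containing free variables) are given by the grammar $T ::= \mathsf{end} \mid X \mid \mu X.T \mid {?}[T_1,\dots,T_n].S \mid {!}[T_1,\dots,T_n].S \mid \&\langle l_1:T_1,\dots,l_n:T_n\rangle \mid \oplus\langle l_1:T_1,\dots,l_n:T_n\rangle$ (input, output, branch, select), where $X$ ranges over type variables and $l_i$ over labels. Types are identified up to $\alpha$-conversion of bound variables, and all substitutions $T[Q/X]$ are capture-avoiding. The size $|T|$ is the number of constructors (nodes) of $T$: $|\mathsf{end}| = |X| = 1$, $|\mu X.T| = 1 + |T|$, $|\&\langle l_i:T_i\rangle_{1\le i\le n}| = |\oplus\langle l_i:T_i\rangle_{1\le i\le n}| = 1 + \sum_{i=1}^n |T_i|$, and $|{?}[T_1,\dots,T_n].S| = |{!}[T_1,\dots,T_n].S| = 1 + \sum_{i=1}^n|T_i| + |S|$. The set of bottom-up subterms $\mathrm{Sub}_{BU}(T)$ is defined by recursion on $T$: $\mathrm{Sub}_{BU}(\mathsf{end}) = \{\mathsf{end}\}$; $\mathrm{Sub}_{BU}(X) = \{X\}$; $\mathrm{Sub}_{BU}(\mu X.T') = \{\mu X.T'\} \cup \{S[\mu X.T'/X] \mid S \in \mathrm{Sub}_{BU}(T')\}$; $\mathrm{Sub}_{BU}(\&\langle l_i:T_i\rangle_{i})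 = \{\&\langle l_i:T_i\rangle_i\} \cup \bigcup_i \mathrm{Sub}_{BU}(T_i)$, and likewise for $\oplus$; $\mathrm{Sub}_{BU}({?}[T_1,\dots,T_n].S) = \{{?}[T_1,\dots,T_n].S\} \cup \bigcup_i \mathrm{Sub}_{BU}(T_i) \cup \mathrm{Sub}_{BU}(S)$, and likewise for ${!}$. *)

From HB Require Import structures.
From mathcomp Require Import all_boot.
From mathcomp Require Import finmap.
From Stdlib Require List.
Set Implicit Arguments. Unset Strict Implicit. Unset Printing Implicit Defensive.
Local Open Scope fset_scope.

Definition label := nat.

(* Session types in locally nameless / de Bruijn form: [Var n] is the type
   variable bound by the (n+1)-th enclosing [Mu] (or, if there are fewer
   enclosing binders, a free variable).  De Bruijn terms are exactly the
   alpha-equivalence classes of named session types. *)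
Inductive stype : Type :=
  | End : stype
  | Var : nat -> stype
  | Mu : stype -> stype
  | Inp : seq stype -> stype -> stype          (* ?[T1,...,Tn].S *)
  | Out : seq stype -> stype -> stype          (* ![T1,...,Tn].S *)
  | Bra : seq (label * stype) -> stype
  | Sel : seq (label * stype) -> stype.

Fixpoint enc (T : stype) : GenTree.tree nat :=
  match T with
  | End => GenTree.Node 0 [::]
  | Var n => GenTree.Leaf n
  | Mu U => GenTree.Node 1 [:: enc U]
  | Inp ts S0 => GenTree.Node 2 (enc S0 :: map enc ts)
  | Out ts S0 => GenTree.Node 3 (enc S0 :: map enc ts)
  | Bra ls => GenTree.Node 4
      (map (fun p => GenTree.Node 0 [:: GenTree.Leaf p.1; enc p.2]) ls)
  | Sel ls => GenTree.Node 5
      (map (fun p => GenTree.Node 0 [:: GenTree.Leaf p.1; enc p.2]) ls)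
  end.

Fixpoint dec (t : GenTree.tree nat) : stype :=
  match t with
  | GenTree.Leaf n => Var n
  | GenTree.Node 1 [:: u] => Mu (dec u)
  | GenTree.Node 2 (s0 :: ts) => Inp (map dec ts) (dec s0)
  | GenTree.Node 3 (s0 :: ts) => Out (map dec ts) (dec s0)
  | GenTree.Node 4 ts => Bra (map (fun u => match u with
        | GenTree.Node _ [:: GenTree.Leaf l; v] => (l, dec v)
        | _ => (0, End) end) ts)
  | GenTree.Node 5 ts => Sel (map (fun u => match u with
        | GenTree.Node _ [:: GenTree.Leaf l; v] => (l, dec v)
        | _ => (0, End) end) ts)
  | _ => End
  end.

Definition stype_ind' (P : stype -> Prop)
  (hE : P End) (hV : forall n, P (Var n)) (hM : forall U, P U -> P (Mu U))
  (hI : forall ts S0, (forall t, List.In t ts -> P t) -> P S0 -> P (Inp ts S0))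
  (hO : forall ts S0, (forall t, List.In t ts -> P t) -> P S0 -> P (Out ts S0))
  (hB : forall ls, (forall p, List.In p ls -> P p.2) -> P (Bra ls))
  (hS : forall ls, (forall p, List.In p ls -> P p.2) -> P (Sel ls)) :
  forall T, P T :=
  fix F T := match T with
  | End => hE
  | Var n => hV n
  | Mu U => hM U (F U)
  | Inp ts S0 => hI ts S0
      ((fix G l : forall t, List.In t l -> P t :=
          match l with
          | [::] => fun t (H : False) => match H with end
          | x :: l' => fun t H => match H with
                       | or_introl e => eq_ind x P (F x) t e
                       | or_intror H' => G l' t H' end end) ts) (F S0)
  | Out ts S0 => hO ts S0
      ((fix G l : forall t, List.In t l -> P t :=
          match l with
          | [::] => fun t (H : False) => match H with end
          | x :: l' => fun t H => match H with
                       | or_introl e => eq_ind x P (F x) t e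
                       | or_intror H' => G l' t H' end end) ts) (F S0)
  | Bra ls => hB ls
      ((fix G l : forall p, List.In p l -> P p.2 :=
          match l with
          | [::] => fun p (H : False) => match H with end
          | x :: l' => fun p H => match H with
                       | or_introl e => eq_ind x (fun q => P q.2) (F x.2) p e
                       | or_intror H' => G l' p H' end end) ls)
  | Sel ls => hS ls
      ((fix G l : forall p, List.In p l -> P p.2 :=
          match l with
          | [::] => fun p (H : False) => match H with end
          | x :: l' => fun p H => match H with
                       | or_introl e => eq_ind x (fun q => P q.2) (F x.2) p e
                       | or_intror H' => G l' p H' end end) ls)
  end.

Lemma encK : cancel enc dec.
Proof.
elim/stype_ind' => //=.
- by move=> U ->.
- move=> ts S0 IH ->; congr Inp; elim: ts IH => //= t ts IHt IH.
  by rewrite (IH t (or_introl erefl)) IHt // => u Hu; apply: IH; right.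
- move=> ts S0 IH ->; congr Out; elim: ts IH => //= t ts IHt IH.
  by rewrite (IH t (or_introl erefl)) IHt // => u Hu; apply: IH; right.
- move=> ls IH; congr Bra; elim: ls IH => //= -[l t] ls IHl IH /=.
  by rewrite (IH (l, t) (or_introl erefl)) IHl // => p Hp; apply: IH; right.
- move=> ls IH; congr Sel; elim: ls IH => //= -[l t] ls IHl IH /=.
  by rewrite (IH (l, t) (or_introl erefl)) IHl // => p Hp; apply: IH; right.
Qed.

HB.instance Definition _ := Countable.copy stype (can_type encK).

Fixpoint lift (c d : nat) (T : stype) : stype :=
  match T with
  | End => End
  | Var n => if n < c then Var n else Var (n + d)
  | Mu U => Mu (lift c.+1 d U)
  | Inp ts S0 => Inp (map (lift c d) ts) (lift c d S0)
  | Out ts S0 => Out (map (lift c d) ts) (lift c d S0)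
  | Bra ls => Bra (map (fun p => (p.1, lift c d p.2)) ls)
  | Sel ls => Sel (map (fun p => (p.1, lift c d p.2)) ls)
  end.

(* subst k Q T : replace variable k by Q (lifted under binders), and
   decrement the free variables above k (the binder of k is removed). *)
Fixpoint subst (k : nat) (Q : stype) (T : stype) : stype :=
  match T with
  | End => End
  | Var n => if n < k then Var n else if n == k then lift 0 k Q else Var n.-1
  | Mu U => Mu (subst k.+1 Q U)
  | Inp ts S0 => Inp (map (subst k Q) ts) (subst k Q S0)
  | Out ts S0 => Out (map (subst k Q) ts) (subst k Q S0)
  | Bra ls => Bra (map (fun p => (p.1, subst k Q p.2)) ls)
  | Sel ls => Sel (map (fun p => (p.1, subst k Q p.2)) ls)
  end.

(* T[Q/X] where X is the variable bound by the outermost binder of T's body *)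
Definition subst0 (Q T : stype) : stype := subst 0 Q T.

Fixpoint stsize (T : stype) : nat :=
  match T with
  | End => 1
  | Var _ => 1
  | Mu U => 1 + stsize U
  | Inp ts S0 => 1 + sumn (map stsize ts) + stsize S0
  | Out ts S0 => 1 + sumn (map stsize ts) + stsize S0
  | Bra ls => 1 + sumn (map (fun p => stsize p.2) ls)
  | Sel ls => 1 + sumn (map (fun p => stsize p.2) ls)
  end.

Fixpoint sub_bu (T : stype) : {fset stype} :=
  match T with
  | End => [fset End]
  | Var n => [fset Var n]
  | Mu U => T |` [fset subst0 T S1 | S1 in sub_bu U]
  | Inp ts S0 => T |` (foldr (fun t acc => sub_bu t `|` acc) fset0 ts `|` sub_bu S0)
  | Out ts S0 => T |` (foldr (fun t acc => sub_bu t `|` acc) fset0 ts `|` sub_bu S0)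
  | Bra ls => T |` foldr (fun p acc => sub_bu p.2 `|` acc) fset0 ls
  | Sel ls => T |` foldr (fun p acc => sub_bu p.2 `|` acc) fset0 ls
  end.

From mathcomp Require Import all_boot finmap.
Local Open Scope fset_scope.

(* Induction on T: every clause of Sub_BU adds at most the term itself to a
   union of subterm sets of the immediate constituents, and the union bound
   turns the induction hypotheses into the sum that defines the size.  Under
   a binder, Sub_BU(mu X.T') is the image of Sub_BU(T') under substitution,
   and taking an image never increases cardinality. *)

Lemma leq_card_fsetU1 (K : choiceType) (a : K) (A : {fset K}) (n : nat) :
  #|` A| <= n -> #|` a |` A| <= 1 + n.
Proof. by move=> leAn; rewrite cardfsU1 leq_add ?leq_b1. Qed.

Lemma leq_card_imfset (K K' : choiceType) (f : K -> K') (A : {fset K}) :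
  #|` [fset f x | x in A]| <= #|` A|.
Proof. exact: leq_imfset_card. Qed.

Lemma leq_card_foldr_fsetU (I : Type) (K : choiceType) (F : I -> {fset K})
    (n : I -> nat) (s : seq I) :
  (forall i, List.In i s -> #|` F i| <= n i) ->
  #|` foldr (fun i acc => F i `|` acc) fset0 s| <= sumn (map n s).
Proof.
elim: s => [|i s IHs] /= leFn; first by rewrite -(@cardfs0 K).
rewrite (leq_trans (leq_card_fsetU _ _).1) // leq_add //.
  by apply: leFn; left.
by apply: IHs => j sj; apply: leFn; right.
Qed.

Theorem mainTheorem1 (T : stype) : #|` sub_bu T| <= stsize T.
Proof.
elim/stype_ind': T => [|n|U IHU|ts S IHts IHS|ts S IHts IHS|ls IHls|ls IHls] /=;
  rewrite ?cardfs1 // -?addnA; apply: leq_card_fsetU1.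
- by apply: leq_trans IHU; apply: leq_card_imfset.
- by rewrite (leq_trans (leq_card_fsetU _ _).1) // leq_add ?leq_card_foldr_fsetU.
- by rewrite (leq_trans (leq_card_fsetU _ _).1) // leq_add ?leq_card_foldr_fsetU.
- exact: leq_card_foldr_fsetU.
- exact: leq_card_foldr_fsetU.
Qed.
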